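(* Let $p$ be a prime and let $G$ be a finite group of order divisible by $p$. Let $P$ be a Sylow $p$-subgroup of $G$ and let $a$ be a non-negative integer such that $a \le \log_p(\exp(\mathbf{Z}(P)))$. Then $k_G(p^a) \ge p^{a-1}$.
   Context: For a finite group $G$, a prime $p$ and a non-negative integer $a$, $k_G(p^a)$ denotes the number of conjugacy classes of $G$ consisting of elements $g$ with $|g|_p = p^a$, where $|g|_p$ is the $p$-part of the order of $g$. $\mathbf{Z}(P)$ is the center of $P$ and $\exp$ denotes the exponent of a group. *)

From mathcomp Require Import all_boot all_fingroup all_solvable.
Set Implicit Arguments. Unset Strict Implicit. Unset Printing Implicit Defensive.
Local Open Scope group_scope.

(* The p-part of the order is
   constant on a conjugacy class, so we test the representative. *)
Definition kG (gT : finGroupType) (G : {group gT}) (p a : nat) : nat :=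
  #|[set C in classes G | (#[repr C]`_p == p ^ a)%N]|.

From mathcomp Require Import all_boot all_fingroup all_solvable.
From mathcomp Require Import zify.
Set Implicit Arguments. Unset Strict Implicit. Unset Printing Implicit Defensive.
Local Open Scope group_scope.

(* Take z in Z(P) of order p^a. The p^(a-1) powers z^u with u = 1 (mod p)
   are pairwise non-conjugate in G. Indeed, if g in G conjugates one of them
   to another, then z^g = z^v with v = 1 (mod p), so g^(p^(a-1)) centralizes z.
   As P <= C_G(z) <= N_G(<z>), the group N_G(<z>)/C_G(z) is a p'-group, in
   which the image of g is a p-element; hence g centralizes z and the two
   powers coincide. All these powers have order p^a, so they lie in p^(a-1)
   distinct classes counted by k_G(p^a). *)

Lemma expn_1addn (x k : nat) :
  exists t, ((1 + x) ^ k = 1 + k * x + x * x * t)%N.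
Proof.
elim: k => [|k [t IHk]]; first by exists 0%N; rewrite expn0 !mul0n muln0.
by exists (t + k + x * t)%N; rewrite expnS IHk; nia.
Qed.

Lemma expn_ppow_1mod (p v n : nat) :
  v = 1 %[mod p] -> v ^ (p ^ n) = 1 %[mod p ^ n.+1].
Proof.
case: p => [|[|p]]; first by rewrite !modn0 => ->; rewrite exp1n.
  by rewrite !exp1n !modn1.
move=> v1; suff [t ->] : exists t, (v ^ (p.+2 ^ n) = 1 + p.+2 ^ n.+1 * t)%N.
  by rewrite addnC mulnC modnMDl.
elim: n => [|n [t IHn]].
  exists (v %/ p.+2); rewrite expn0 expn1 {1}(divn_eq v p.+2) v1 modn_small //.
  by rewrite addnC mulnC.
have [s pow_p] := expn_1addn (p.+2 ^ n.+1 * t) p.+2.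
exists (t + p.+2 ^ n * t * t * s)%N.
by rewrite expnSr expnM IHn pow_p !expnSr; nia.
Qed.

Lemma coprime_1mod (p u : nat) : u = 1 %[mod p] -> coprime p u.
Proof. by move=> u1; rewrite /coprime -gcdn_modr u1 gcdn_modr gcdn1. Qed.

Section PowersCentralizedBySylow.

Variable gT : finGroupType.
Implicit Types (G H N P : {group gT}) (x z g : gT).

Lemma cent1_conjg_eq g z : (g \in 'C[z]) = (z ^ g == z).
Proof. by rewrite (sameP cent1P commgP) commg1_sym conjg_fix. Qed.

Lemma conjg_expgn z g v n : z ^ g = z ^+ v -> z ^ (g ^+ n) = z ^+ (v ^ n).
Proof.
move=> zg; elim: n => [|n IHn]; first by rewrite expg0 conjg1 expn0 expg1.
by rewrite expgSr conjgM IHn conjXg zg -expgM expnS.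
Qed.

Lemma cycleX_coprime x m : coprime #[x] m -> <[x ^+ m]> = <[x]>.
Proof. by rewrite -generator_coprime => /eqP. Qed.

Lemma orderX_coprime x m : coprime #[x] m -> #[x ^+ m] = #[x].
Proof. by move=> co_xm; rewrite orderXgcd (eqnP co_xm) divn1. Qed.

Lemma p'index_expn_mem (p n : nat) H N g :
  prime p -> N \subset 'N(H) -> p^'.-nat #|N : H| -> g \in N ->
  g ^+ (p ^ n) \in H -> g \in H.
Proof.
move=> pr_p nHN p'NH Ng gpH; have nHg := subsetP nHN g Ng.
apply: (coset_idr nHg); apply/eqP; rewrite -order_eq1; apply/eqP.
apply: (@pnat_1 p).
  apply: (@pnat_dvd _ (p ^ n)); last by rewrite pnatX pnat_id.
  by rewrite order_dvdn -(morphX _ _ nHg); apply/eqP; exact: coset_id gpH.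
apply: mem_p_elt (mem_quotient H Ng).
by rewrite /pgroup card_quotient.
Qed.

Lemma cent1_conjg_1mod (p n : nat) G P z g v :
  prime p -> p.-Sylow(G) P -> P \subset 'C[z] -> #[z] = (p ^ n.+1)%N ->
  g \in G -> v = 1 %[mod p] -> z ^ g = z ^+ v -> g \in 'C[z].
Proof.
move=> pr_p sylP cPz oz Gg v1 zg.
have NGg : g \in 'N_G(<[z]>).
  by rewrite inE Gg inE -cycleJ cycle_subG zg groupX ?cycle_id.
have sPC : P \subset 'C_G(<[z]>) by rewrite subsetI (pHall_sub sylP) cent_cycle.
have sCN : 'C_G(<[z]>) \subset 'N_G(<[z]>) by rewrite setIS ?cent_sub.
have p'NC : p^'.-nat #|'N_G(<[z]>) : 'C_G(<[z]>)|.
  have sylN := pHall_subl (subset_trans sPC sCN) (subsetIl _ _) sylP.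
  have /and3P[_ _ p'NP] := sylN.
  exact: pnat_dvd (indexgS _ sPC) p'NP.
suff : g \in 'C_G(<[z]>) by rewrite cent_cycle => /setIP[].
apply: (p'index_expn_mem pr_p (subcent_norm _ _) p'NC NGg (n := n)).
rewrite inE groupX //= cent_cycle cent1_conjg_eq (conjg_expgn _ zg).
by rewrite -expg_mod_order oz expn_ppow_1mod // -oz expg_mod_order expg1.
Qed.

Lemma conjg_expg_1mod_eq (p n : nat) G P z g u w :
  prime p -> p.-Sylow(G) P -> P \subset 'C[z] -> #[z] = (p ^ n.+1)%N ->
  g \in G -> u = 1 %[mod p] -> w = 1 %[mod p] -> (z ^+ u) ^ g = z ^+ w ->
  z ^+ u = z ^+ w.
Proof.
move=> pr_p sylP cPz oz Gg u1 w1 zug.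
have gen_u : <[z ^+ u]> = <[z]>.
  by apply: cycleX_coprime; rewrite oz coprimeXl ?coprime_1mod.
have /cycleP[v zg] : z ^ g \in <[z]>.
  apply: (subsetP (cycleX z w)).
  by rewrite -zug cycleJ gen_u memJ_conjg cycle_id.
have v1 : v = 1 %[mod p].
  have : v * u == w %[mod p ^ n.+1].
    by rewrite -oz -eq_expg_mod_order expgM -zg -conjXg zug.
  move/eqP/(congr1 (modn^~ p)); rewrite !modn_dvdm ?dvdn_exp //.
  by rewrite -modnMmr u1 modnMmr muln1 w1.
have := cent1_conjg_1mod pr_p sylP cPz oz Gg v1 zg.
by rewrite cent1_conjg_eq -zug conjXg => /eqP ->.
Qed.

Lemma pexponent_witness (p a : nat) G :
  prime p -> p.-group G -> a <= logn p (exponent G) ->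
  exists2 z, z \in G & #[z] = (p ^ a)%N.
Proof.
move=> pr_p pG le_a; have [z0 Gz0 expG] := exponent_witness (pgroup_nil pG).
have [e oz0] := p_natP (mem_p_elt pG Gz0).
rewrite expG oz0 pfactorK // in le_a.
exists (z0 ^+ (p ^ (e - a))); first exact: groupX.
by rewrite (orderXexp _ oz0) subKn.
Qed.

Lemma kG_gt0 G p : 0 < kG G p 0.
Proof.
rewrite /kG card_gt0; apply/set0Pn; exists (1 ^: G).
by rewrite inE mem_classes //= class1G repr_group order1 partn1 expn0.
Qed.

Lemma kG_ge_centralized_elt (p n : nat) G P z :
  prime p -> p.-Sylow(G) P -> z \in G -> P \subset 'C[z] ->
  #[z] = (p ^ n.+1)%N -> p ^ n <= kG G p n.+1.
Proof.
move=> pr_p sylP Gz cPz oz.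
pose u (i : 'I_(p ^ n)) := (1 + i * p)%N.
have u1 i : u i = 1 %[mod p] by rewrite /u addnC modnMDl.
have u_lt i : u i < p ^ n.+1.
  by rewrite /u expnSr; have := ltn_ord i; have := prime_gt1 pr_p; nia.
have ozu i : #[z ^+ u i] = (p ^ n.+1)%N.
  by rewrite orderX_coprime oz ?coprimeXl ?coprime_1mod.
pose cl i := (z ^+ u i) ^: G.
have cl_inj : injective cl.
  move=> i j /class_eqP/imsetP[g Gg zjg].
  have := conjg_expg_1mod_eq pr_p sylP cPz oz Gg (u1 j) (u1 i) (esym zjg).
  move/eqP; rewrite eq_expg_mod_order oz !modn_small // => /eqP.
  by rewrite /u => uji; apply: ord_inj; have := prime_gt0 pr_p; nia.
have cl_sub :
    cl @: setT \subset [set C in classes G | (#[repr C]`_p == p ^ n.+1)%N].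
  apply/subsetP=> _ /imsetP[i _ ->]; rewrite inE mem_classes ?groupX //=.
  have /imsetP[g _ ->] := mem_repr _ (class_refl G (z ^+ u i)).
  by rewrite orderJ ozu part_pnat_id ?pnatX ?pnat_id.
by have := subset_leq_card cl_sub; rewrite card_imset // cardsT card_ord.
Qed.

End PowersCentralizedBySylow.

Theorem theorem1p1 (gT : finGroupType) (G P : {group gT}) (p a : nat) :
  prime p -> (p %| #|G|)%N -> P \in 'Syl_p(G) ->
  (a <= logn p (exponent 'Z(P)))%N ->
  (p ^ a <= kG G p a * p)%N.
Proof.
move=> pr_p _; rewrite inE => sylP.
have pZ : p.-group 'Z(P) := pgroupS (center_sub P) (pHall_pgroup sylP).
case: a => [_ | n le_n]; first by rewrite expn0 muln_gt0 kG_gt0 prime_gt0.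
have [z /setIP[Pz cPz] oz] := pexponent_witness pr_p pZ le_n.
have Gz : z \in G := subsetP (pHall_sub sylP) z Pz.
rewrite expnSr leq_mul2r.
by rewrite (kG_ge_centralized_elt pr_p sylP Gz _ oz) ?orbT ?sub_cent1.
Qed.
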